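(* Consider smoothed HS-$k$ with ground set $\mathcal B$ and collection $\mathcal C=\{C_1,\dots,C_n\}$, where each set weight $w_i$ is drawn independently from a distribution with density $f_i:[0,1]\to[0,\phi]$, and let $B=\max_{b\in\mathcal B}|\{C_i\in\mathcal C:b\in C_i\}|$. Then the expected maximum number of iterations of local search (over all initial feasible subsets and all improving sequences) is $O(3^{kB}|\mathcal B|^kn^2\phi)$, with an absolute hidden constant.
   Context: HS-$k$ (Hitting Set): given a finite ground set $\mathcal B$, a collection $\mathcal C=\{C_1,\dots,C_n\}$ of subsets of $\mathcal B$ with weights $w_i$, and an integer $m$, a feasible solution is $S\subseteq\mathcal B$ with $|S|\le m$; its weight is $\sum_{i:\,S\cap C_i\ne\emptyset}w_i$, to be maximized. Neighbours of $S$ are feasible subsets obtained by adding some $k_1$ elements and removing some $k_2$ elements with $k_1+k_2\le k$. A solution is a feasible subset with no neighbour of strictly larger weight; local search repeatedly moves to a strictly better neighbour. *)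

From HB Require Import structures.
From mathcomp Require Import all_boot all_order all_algebra.
From mathcomp Require Import all_classical all_reals all_analysis.

Set Implicit Arguments.
Unset Strict Implicit.
Unset Printing Implicit Defensive.

Import Order.TTheory GRing.Theory Num.Theory.

Local Open Scope ring_scope.

Section HS.
Variables (T : finType) (n : nat) (C : 'I_n -> {set T}) (m k : nat).

Definition feasible (S : {set T}) : bool := (#|S| <= m)%N.

Definition hs_weight {R : numDomainType} (w : 'I_n -> R) (S : {set T}) : R :=
  \sum_(i < n | S :&: C i != finset.set0) w i.

Definition kneighbour (S S' : {set T}) : bool :=
  [exists A : {set T}, exists Rm : {set T},
     [&& [disjoint A & S], Rm \subset S, (#|A| + #|Rm| <= k)%N &
         S' == (S :|: A) :\: Rm]].

Definition improving_step {R : numDomainType} (w : 'I_n -> R) (S S' : {set T}) : bool :=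
  [&& feasible S', kneighbour S S' & hs_weight w S < hs_weight w S'].

Definition has_run {R : numDomainType} (w : 'I_n -> R) (t : nat) : bool :=
  [exists S0 : {set T}, exists s : t.-tuple {set T},
     feasible S0 && path (improving_step w) S0 s].

(* Every improving run visits pairwise distinct sets
   (weights strictly increase), so it has fewer than 2^|B| steps; the
   bound in the index range is therefore never active. *)
Definition max_iterations {R : numDomainType} (w : 'I_n -> R) : nat :=
  \max_(t < (2 ^ #|T|).+1 | has_run w t) t.

Definition max_degree : nat := \max_(b : T) #|[set i : 'I_n | b \in C i]|.

End HS.

Definition mutually_independent {R : realType} {d : measure_display}
  {Omega : measurableType d} (P : probability Omega R) (n : nat)
  (X : 'I_n -> Omega -> R) : Prop :=
  forall A : 'I_n -> set R, (forall i, measurable (A i)) ->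
    P (\bigcap_i (X i @^-1` A i))%classic = (\prod_(i < n) P (X i @^-1` A i)%classic)%E.

Definition has_density_bounded {R : realType} {d : measure_display}
  {Omega : measurableType d} (P : probability Omega R) (X : Omega -> R)
  (f : R -> R) (phi : R) : Prop :=
  [/\ measurable_fun setT f,
      (forall x, 0 <= f x <= phi),
      (forall x, (x < 0 \/ 1 < x) -> f x = 0) &
      (forall A : set R, measurable A ->
         P (X @^-1` A)%classic = (\int[lebesgue_measure]_(x in A) (f x)%:E)%E)].

(* Each improving step changes the weight by a linear form [sum_i c_i w_i] with
   coefficients [c_i] in {0, +1, -1}, supported on the at most [k B] sets that
   contain one of the at most [k] exchanged elements [h]; there are at most
   [|B|^k 3^(k B)] such pairs [(h, c)].  Weights lie in [0, n] and every step is
   an improvement, so a run of [t] steps has a step of gain in (0, n / t].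
   For fixed [c] with [c_j = +-1], the density bound on [w_j] gives
   [P (0 < sum_i c_i w_i <= eps) <= phi eps] whatever the other weights are;
   formally, the other weights are discretised on a grid of mesh [dl], each grid
   box has probability at most [phi (eps + 2 n dl)] times the product of the
   probabilities of its cells by independence, and [dl] then tends to 0.
   A union bound gives [P (more than t steps) <= |B|^k 3^(k B) phi n / (t + 1)],
   and summing over [t < 2^n] (runs visit distinct sets of hit sets) bounds the
   expectation by [|B|^k 3^(k B) phi n (n + 1)]. *)

From HB Require Import structures.
From mathcomp Require Import all_boot all_order all_algebra.
From mathcomp Require Import all_classical all_reals all_analysis.
From mathcomp Require Import ring lra zify.

Import Order.TTheory GRing.Theory Num.Theory.

Set Implicit Arguments.
Unset Strict Implicit.
Unset Printing Implicit Defensive.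

Local Open Scope ring_scope.

Lemma leq_card_bigcup (I T : finType) (S : I -> {set T}) :
  (#|(\bigcup_(i : I) S i)%SET| <= \sum_(i : I) #|S i|)%N.
Proof.
apply: (big_ind2 (fun (A : {set T}) (x : nat) => #|A| <= x)%N) => [|A x B y hA hB|//].
  by rewrite cards0.
by apply: leq_trans (leq_add hA hB); case: (leq_card_setU A B).
Qed.

Lemma path_last_sub_ge (R : realDomainType) (X : Type) (e : rel X) (g : X -> R)
    (eta : R) :
  (forall x y, e x y -> eta <= g y - g x) ->
  forall s x, path e x s -> (size s)%:R * eta <= g (last x s) - g x.
Proof.
move=> step_ge; elim=> [|y s IH] x /=; first by rewrite mul0r subrr.
case/andP=> /step_ge exy /IH; rewrite mulrSr mulrDl mul1r; lra.
Qed.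

Lemma path_small_step (R : realFieldType) (X : Type) (e : rel X) (g : X -> R)
    (x : X) (s : seq X) (D : R) :
  path e x s -> (0 < size s)%N -> g (last x s) - g x <= D ->
  exists y z, e y z /\ g z - g y <= D / (size s)%:R.
Proof.
move=> ps s_gt0 le_D; apply: contrapT => no_small.
have steps_big y z : e y z -> D / (size s)%:R < g z - g y.
  by move=> eyz; rewrite ltNge; apply/negP => small; apply: no_small; exists y, z.
clear no_small; case: s s_gt0 ps le_D steps_big => [//|y s] _ /= /andP[exy ps].
set eta := D / _ => le_D steps_big.
have := path_last_sub_ge (fun a b eab => ltW (steps_big a b eab)) ps.
have := steps_big _ _ exy.
have : (size s).+1%:R * eta = D by rewrite /eta mulrC divfK // pnatr_eq0.
rewrite mulrSr mulrDl mul1r; lra.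
Qed.

Lemma sum_ltn_minn (N x : nat) : (\sum_(t < N) (t < x))%N = minn N x.
Proof.
elim: N => [|N IH]; first by rewrite big_ord0 min0n.
by rewrite big_ord_recr /= IH; case: (ltnP N x) => /=; lia.
Qed.

Lemma harmonic_pow2_le (R : realFieldType) (n : nat) :
  \sum_(t < 2 ^ n) (t.+1%:R : R)^-1 <= n.+1%:R.
Proof.
elim: n => [|n IH]; first by rewrite expn0 big_ord1 invr1.
rewrite expnS mul2n -addnn big_split_ord /= -(addn1 n.+1) natrD.
apply: lerD => //.
apply: (@le_trans _ _ (\sum_(t < 2 ^ n) ((2 ^ n)%:R : R)^-1)).
  apply: ler_sum => t _; rewrite lef_pV2 ?posrE ?ltr0n ?expn_gt0 //= ler_nat.
  exact: leq_trans (leq_addr t _) _.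
by rewrite sumr_const card_ord -[_ *+ _]mulr_natl mulfV // pnatr_eq0 -lt0n expn_gt0.
Qed.

Definition signed_coef {R : pzRingType} (x : 'I_3) : R :=
  if val x == 1%N then 1 else if val x == 2%N then -1 else 0.

Lemma signed_coef_pm {R : pzRingType} (x : 'I_3) :
  x != ord0 -> signed_coef x = 1 :> R \/ signed_coef x = -1 :> R.
Proof. by case: x => [[|[|[|x]]] ?] //= _; rewrite /signed_coef /=; [left|right]. Qed.

Lemma norm_signed_coef_le1 {R : numDomainType} (x : 'I_3) :
  `|signed_coef x : R| <= 1.
Proof.
by rewrite /signed_coef; case: ifP => _; rewrite ?normr1 //; case: ifP => _;
  rewrite ?normrN1 ?normr0.
Qed.

Section StepPatterns.
Variables (T : finType) (n : nat) (C : 'I_n -> {set T}) (k : nat).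

Definition affected_sets (h : {ffun 'I_k -> T}) : {set 'I_n} :=
  [set i | [exists b, h b \in C i]].

(* [a] gives the coefficient [signed_coef (a i)] of each [w_i] in the weight
   change caused by exchanging the elements listed by [h]. *)
Definition admissible_pattern (h : {ffun 'I_k -> T}) (a : {ffun 'I_n -> 'I_3}) :=
  [forall i, (a i != ord0) ==> (i \in affected_sets h)].

Lemma card_affected_sets h : (#|affected_sets h| <= k * max_degree C)%N.
Proof.
have -> : affected_sets h = (\bigcup_(b : 'I_k) [set i | h b \in C i])%SET.
  apply/setP => i; rewrite inE; apply/existsP/bigcupP => [[b hb]|[b _]].
    by exists b; rewrite ?inE.
  by rewrite inE; exists b.
apply: leq_trans (leq_card_bigcup _) _.
apply: (@leq_trans (\sum_(b : 'I_k) max_degree C)); last by rewrite sum_nat_const card_ord.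
by apply: leq_sum => b _; exact: (@leq_bigmax _ (fun x => #|[set i | x \in C i]|) (h b)).
Qed.

Lemma card_admissible_pattern h :
  (#|[pred a | admissible_pattern h a]| <= 3 ^ (k * max_degree C))%N.
Proof.
apply: (@leq_trans #|pffun_on (ord0 : 'I_3) (affected_sets h) predT|).
  apply/subset_leq_card/fintype.subsetP => a; rewrite inE => /forallP adm.
  apply/familyP => i; case: ifP => //= hi.
  by move: (adm i); rewrite hi implybF negbK.
by rewrite card_pffun_on card_ord leq_pexp2l // card_affected_sets.
Qed.

End StepPatterns.

Section LocalSearch.
Variables (R : realFieldType) (T : finType) (n : nat) (C : 'I_n -> {set T}) (m k : nat).
Implicit Types (v : 'I_n -> R) (S : {set T}).

Definition pattern_gain (a : {ffun 'I_n -> 'I_3}) v : R := \sum_i signed_coef (a i) * v i.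

Definition hits S (i : 'I_n) : bool := S :&: C i != finset.set0.

Definition step_pattern S S' : {ffun 'I_n -> 'I_3} :=
  [ffun i => if hits S' i && ~~ hits S i then inord 1
             else if hits S i && ~~ hits S' i then inord 2 else ord0].

Lemma hs_weight_subE v S S' :
  hs_weight C v S' - hs_weight C v S = pattern_gain (step_pattern S S') v.
Proof.
rewrite /hs_weight [X in X - _]big_mkcond [X in _ - X]big_mkcond -sumrB.
apply: eq_bigr => i _; rewrite ffunE /signed_coef /hits.
by case: (S' :&: C i != _); case: (S :&: C i != _); rewrite /= ?inordK //=; lra.
Qed.

Lemma kneighbour_support S S' : kneighbour k S S' ->
  exists2 U : {set T}, (#|U| <= k)%N &
    forall i, [disjoint U & C i] -> hits S' i = hits S i.
Proof.
case/existsP=> A /existsP[Rm /and4P[_ _ cardk /eqP ->]].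
exists (A :|: Rm); first by apply: leq_trans cardk; case: (leq_card_setU A Rm).
move=> i dUC; congr (_ != _); apply/setP => x; rewrite !inE.
case xC: (x \in C i); rewrite ?andbF ?andbT //.
have : x \notin A :|: Rm by rewrite (disjointFl dUC) // xC.
by rewrite !inE negb_or => /andP[/negbTE -> /negbTE ->]; rewrite orbF.
Qed.

Lemma small_set_enum (U : {set T}) (x0 : T) : (#|U| <= k)%N ->
  exists h : {ffun 'I_k -> T}, forall x, x \in U -> exists b, h b = x.
Proof.
move=> cardU; exists [ffun b : 'I_k => nth x0 (enum U) b] => x xU.
have lt_k : (index x (enum U) < k)%N.
  by apply: leq_trans cardU; rewrite cardE index_mem mem_enum.
by exists (Ordinal lt_k); rewrite ffunE /= nth_index ?mem_enum.
Qed.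

Lemma improving_step_gain v S S' :
  kneighbour k S S' -> hs_weight C v S < hs_weight C v S' ->
  exists (h : {ffun 'I_k -> T}) a, admissible_pattern C h a /\
    hs_weight C v S' - hs_weight C v S = pattern_gain a v.
Proof.
move=> /kneighbour_support[U cardU sameU] lt_SS'.
case: (set_0Vmem U) => [U0 | [x0 _]].
  suff E : hs_weight C v S' = hs_weight C v S by move: lt_SS'; rewrite E ltxx.
  by apply: eq_bigl => i; apply: sameU; rewrite U0 -setI_eq0 finset.set0I.
have [h hU] := small_set_enum x0 cardU.
exists h, (step_pattern S S'); split; last exact: hs_weight_subE.
apply/forallP => i; apply/implyP => ai.
have : hits S' i != hits S i.
  by move: ai; rewrite ffunE; case: (hits S' i); case: (hits S i).
apply: contraR => i_unaffected; apply/eqP/sameU/pred0P => x /=.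
apply/negbTE/negP => /andP[xU xC].
have [b hbx] := hU x xU.
by move: i_unaffected; rewrite inE negb_exists => /forallP/(_ b); rewrite hbx xC.
Qed.

Lemma hs_weight_bounds v : (forall i, 0 <= v i <= 1) ->
  forall S, 0 <= hs_weight C v S <= n%:R.
Proof.
move=> v01 S; apply/andP; split.
  by apply: sumr_ge0 => i _; case/andP: (v01 i).
rewrite /hs_weight big_mkcond /= -[n in n%:R]card_ord -sumr_const.
by apply: ler_sum => i _; case: ifP => _; case/andP: (v01 i).
Qed.

Lemma has_run_small_gain v t : (forall i, 0 <= v i <= 1) -> (0 < t)%N ->
  has_run C m k v t ->
  exists (h : {ffun 'I_k -> T}) a,
    admissible_pattern C h a /\ 0 < pattern_gain a v <= n%:R / t%:R.
Proof.
move=> v01 t_gt0 /existsP[S0 /existsP[s /andP[_ ps]]].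
have spread : hs_weight C v (last S0 s) - hs_weight C v S0 <= n%:R.
  have /andP[? ?] := hs_weight_bounds v01 (last S0 s).
  have /andP[? ?] := hs_weight_bounds v01 S0; lra.
have [|S [S' [/and3P[_ nSS' ltSS'] small]]] := path_small_step ps _ spread.
  by rewrite size_tuple.
have [h [a [ha gainE]]] := improving_step_gain nSS' ltSS'.
exists h, a; split => //; rewrite -gainE subr_gt0 ltSS'.
by rewrite size_tuple in small.
Qed.

Lemma has_run_lt v t : has_run C m k v t -> (t < 2 ^ n)%N.
Proof.
case/existsP => S0 /existsP[s /andP[_ ps]].
pose hit_sets S : {set 'I_n} := [set i | hits S i].
have weightE S : hs_weight C v S = \sum_(i in hit_sets S) v i.
  by apply: eq_bigl => i; rewrite inE.
have : uniq (map (hs_weight C v) (S0 :: s)).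
  apply: (sorted_uniq (@lt_trans _ _) (@ltxx _ _)); rewrite /sorted /= path_map.
  by apply: sub_path ps => x y /and3P[].
rewrite (eq_map weightE) (map_comp (fun p : {set 'I_n} => \sum_(i in p) v i)).
move=> /map_uniq u.
have : (#|map hit_sets (S0 :: s)| <= #|powerset [set: 'I_n]|)%N.
  by apply/subset_leq_card/fintype.subsetP => p _; rewrite powersetE finset.subsetT.
by rewrite card_powerset cardsT card_ord (card_uniqP u) size_map /= size_tuple.
Qed.

Lemma max_iterations_has_run v : (0 < max_iterations C m k v)%N ->
  has_run C m k v (max_iterations C m k v).
Proof.
rewrite /max_iterations.
case: (pickP (fun t : 'I_(2 ^ #|T|).+1 => has_run C m k v t)) => [t0 rt0 _|none].
  have [|t rt maxE] :=
    @eq_bigmax_cond _ (fun t : 'I_(2 ^ #|T|).+1 => has_run C m k v t) val.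
    by apply/card_gt0P; exists t0.
  by rewrite maxE.
by rewrite big_pred0.
Qed.

Lemma max_iterations_lt v : (max_iterations C m k v < 2 ^ n)%N.
Proof.
case: (posnP (max_iterations C m k v)) => [->|]; first by rewrite expn_gt0.
by move/max_iterations_has_run/has_run_lt.
Qed.

End LocalSearch.

Local Open Scope classical_set_scope.

Lemma le_measure_bigsetU (R : realType) (d : measure_display) (Omega : measurableType d)
    (mu : {measure set Omega -> \bar R}) (I : Type) (r : seq I) (p : pred I)
    (F : I -> set Omega) :
  (forall i, measurable (F i)) ->
  (mu (\big[setU/set0]_(i <- r | p i) F i) <= \sum_(i <- r | p i) mu (F i))%E.
Proof.
move=> mF; elim: r => [|x r IH]; first by rewrite !big_nil measure0.
rewrite !big_cons; case: ifP => _ //.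
apply: le_trans (measureU2 _ _ _) _ => //; first exact: bigsetU_measurable.
exact: leeD.
Qed.

Lemma le_measure_bigsetU_card (R : realType) (d : measure_display)
    (Omega : measurableType d) (mu : {measure set Omega -> \bar R}) (I : finType)
    (p : pred I) (F : I -> set Omega) (c : R) :
  (forall i, measurable (F i)) -> (forall i, p i -> (mu (F i) <= c%:E)%E) ->
  (mu (\big[setU/set0]_(i | p i) F i) <= (#|p|%:R * c)%:E)%E.
Proof.
move=> mF le_c; apply: le_trans (le_measure_bigsetU _ _ _ mF) _.
apply: le_trans (@lee_sum _ _ _ (fun=> c%:E) _ _ le_c) _.
by rewrite sumEFin sumr_const mulr_natl.
Qed.

Lemma mem_bigsetU (T : Type) (I : eqType) (r : seq I) (p : pred I) (F : I -> set T)
    (i : I) (x : T) :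
  i \in r -> p i -> F i x -> (\big[setU/set0]_(j <- r | p j) F j) x.
Proof.
elim: r => [|j r IH] //; rewrite in_cons big_cons => /orP[/eqP <- -> Fix|ir pi Fix].
  by left.
by case: ifP => _; [right|]; apply: IH.
Qed.

(* The number of iterations is not known to be measurable; the integral of a
   nonnegative function is a supremum over the simple functions below it. *)
Lemma le_integral_ge0 (R : realType) (d : measure_display) (Omega : measurableType d)
    (mu : {measure set Omega -> \bar R}) (F G : Omega -> \bar R) :
  (forall x, (0 <= F x)%E) -> (forall x, (F x <= G x)%E) ->
  (\int[mu]_x F x <= \int[mu]_x G x)%E.
Proof.
move=> F0 FG; have G0 x : (0 <= G x)%E by apply: le_trans (F0 x) (FG x).
rewrite !ge0_integralTE //; apply: ereal_sup_le => _ [h hF <-]; exists h => //.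
by move=> x; apply: le_trans (hF x) (FG x).
Qed.

Section SmoothedWeights.
Context (R : realType) (d : measure_display) (Omega : measurableType d)
  (P : probability Omega R) (n : nat) (w : 'I_n -> Omega -> R)
  (f : 'I_n -> R -> R) (phi : R).
Hypotheses (mw : forall i, measurable_fun setT (w i))
  (ind : mutually_independent P w)
  (dens : forall i, has_density_bounded P (w i) (f i) phi).

Lemma measurable_weight_preimage i (A : set R) :
  measurable A -> measurable (w i @^-1` A).
Proof. by move=> mA; rewrite -[_ @^-1` _]setTI; apply: mw. Qed.

Lemma prob_fineE (A : set Omega) : measurable A -> P A = (fine (P A))%:E.
Proof. by move=> mA; rewrite fineK // fin_num_measure. Qed.

Lemma density_bound_ge0 (i : 'I_n) : 0 <= phi.
Proof. by case: (dens i) => _ f_bound _ _; case/andP: (f_bound 0); exact: le_trans. Qed.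

Lemma prob_preimage_le i (A : set R) : measurable A ->
  (P (w i @^-1` A) <= phi%:E * lebesgue_measure A)%E.
Proof.
move=> mA; case: (dens i) => mf f0 _ Pf; rewrite Pf // -integral_cst //.
apply: ge0_le_integral => //.
- by move=> x _; rewrite lee_fin; case/andP: (f0 x).
- by apply/measurable_realfun.measurable_EFinP; exact: measurable_funS mf.
- by move=> x _; rewrite lee_fin; case/andP: (f0 x).
Qed.

Lemma prob_preimage_itv_le i (lo hi : R) (b0 b1 : bool) : lo < hi ->
  (P (w i @^-1` [set` Interval (BSide b0 lo) (BSide b1 hi)]) <= (phi * (hi - lo))%:E)%E.
Proof.
move=> lt_lohi; apply: le_trans (prob_preimage_le i (measurable_itv _)) _.
by rewrite lebesgue_measure_itv /= lte_fin lt_lohi /= -EFinD EFinM.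
Qed.

Definition off_cube : set Omega := \big[setU/set0]_(i < n) w i @^-1` ~` `[0, 1].

Lemma measurable_off_cube : measurable off_cube.
Proof.
apply: bigsetU_measurable => i _; apply: measurable_weight_preimage.
by apply: measurableC; exact: measurable_itv.
Qed.

Lemma prob_off_cube : P off_cube = 0%E.
Proof.
apply/eqP; rewrite eq_le measure_ge0 andbT.
apply: le_trans (le_measure_bigsetU _ _ _ _) _ => [i|].
  by apply/measurable_weight_preimage/measurableC; exact: measurable_itv.
rewrite big1 // => i _; case: (dens i) => _ _ f01 Pf.
apply: eq_trans (Pf _ _) _; first by apply: measurableC; exact: measurable_itv.
apply: integral0_eq => x /= /negP; rewrite in_itv /= negb_and -!ltNge => x_out.
by rewrite f01 //; case/orP: x_out; [left|right].
Qed.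

Lemma not_off_cube om : ~ off_cube om -> forall i, 0 <= w i om <= 1.
Proof.
move=> on_cube i; apply: contrapT => out; apply: on_cube.
by apply: (mem_bigsetU (i := i)); rewrite ?mem_index_enum //= in_itv.
Qed.

Definition linear_event (a : 'I_n -> R) (eps : R) : set Omega :=
  ~` off_cube `&` (fun om => \sum_i a i * w i om) @^-1` `]0, eps].

Lemma measurable_linear_event a eps : measurable (linear_event a eps).
Proof.
apply: measurableI; first by apply: measurableC; exact: measurable_off_cube.
have mF : measurable_fun setT (fun om => \sum_i a i * w i om).
  apply: measurable_sum => i.
  by apply: measurable_realfun.measurable_funM; [exact: measurable_cst | exact: mw].
by rewrite -[X in measurable X]setTI; apply: mF => //; exact: measurable_itv.
Qed.

Section Grid.
Variables (a : 'I_n -> R) (j : 'I_n) (eps dl : R) (M : nat).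
Hypotheses (a_j : a j = 1 \/ a j = -1) (norm_a : forall i, `|a i| <= 1)
  (eps_ge0 : 0 <= eps) (dl_gt0 : 0 < dl) (M_dl : 1 < M%:R * dl).

Definition cell (l : nat) : set R := `[l%:R * dl, l.+1%:R * dl[.

Definition grid_offset (g : {ffun 'I_n -> 'I_M}) : R :=
  \sum_(i < n | i != j) a i * ((g i)%:R * dl).

Definition pivot_lo (g : {ffun 'I_n -> 'I_M}) : R := - grid_offset g - n%:R * dl.
Definition pivot_hi (g : {ffun 'I_n -> 'I_M}) : R := eps - grid_offset g + n%:R * dl.

Definition pivot_range (g : {ffun 'I_n -> 'I_M}) : set R :=
  if a j == 1 then `]pivot_lo g, pivot_hi g] else `[- pivot_hi g, - pivot_lo g[.

(* The [j]-th coordinate is not discretised: grid points with [g j != 0] give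
   empty boxes, so that the boxes are indexed by the full product ['I_M ^ n]. *)
Definition grid_box (g : {ffun 'I_n -> 'I_M}) (i : 'I_n) : set R :=
  if i == j then (if val (g j) == 0%N then pivot_range g else set0) else cell (g i).

Definition grid_event (g : {ffun 'I_n -> 'I_M}) : set Omega :=
  \bigcap_i (w i @^-1` grid_box g i).

Lemma measurable_grid_box g i : measurable (grid_box g i).
Proof.
rewrite /grid_box /pivot_range /cell; case: ifP => _; last exact: measurable_itv.
by case: ifP => _ //; case: ifP => _; exact: measurable_itv.
Qed.

Lemma measurable_grid_event g : measurable (grid_event g).
Proof.
apply: (@fin_bigcap_measurable _ Omega 'I_n setT) => [|i _].
  exact: finite_finset.
by apply: measurable_weight_preimage; exact: measurable_grid_box.
Qed.

Lemma prob_pivot_range_le g :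
  (P (w j @^-1` pivot_range g) <= (phi * (eps + 2 * n%:R * dl))%:E)%E.
Proof.
have n_gt0 : 0 < n%:R :> R by rewrite ltr0n (leq_ltn_trans (leq0n j) (ltn_ord j)).
have width : pivot_hi g - pivot_lo g = eps + 2 * n%:R * dl.
  by rewrite /pivot_lo /pivot_hi; ring.
have ndl_gt0 : 0 < n%:R * dl by rewrite mulr_gt0.
have lt_lohi : pivot_lo g < pivot_hi g.
  by rewrite -subr_gt0 width -mulrA ltr_wpDl // mulr_gt0.
rewrite /pivot_range; case: ifP => _.
  by apply: le_trans (prob_preimage_itv_le _ _ _ lt_lohi) _; rewrite width.
have lt_lohi' : - pivot_hi g < - pivot_lo g by rewrite ltrN2.
by apply: le_trans (prob_preimage_itv_le _ _ _ lt_lohi') _; rewrite opprK addrC width.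
Qed.

Lemma cell_inj l l' x : cell l x -> cell l' x -> l = l'.
Proof.
rewrite /cell /= !in_itv /= => /andP[a1 a2] /andP[b1 b2].
have h1 : l%:R * dl < l'.+1%:R * dl by apply: le_lt_trans b2.
have h2 : l'%:R * dl < l.+1%:R * dl by apply: le_lt_trans a2.
rewrite ltr_pM2r // ltr_nat ltnS in h1; rewrite ltr_pM2r // ltr_nat ltnS in h2.
by apply/eqP; rewrite eqn_leq h1 h2.
Qed.

Lemma sum_prob_cell_le1 i : \sum_(l < M) fine (P (w i @^-1` cell l)) <= 1.
Proof.
have mcell (l : 'I_M) : measurable (w i @^-1` cell l).
  by apply: measurable_weight_preimage; exact: measurable_itv.
have disj : trivIset [set: 'I_M] (fun l : 'I_M => w i @^-1` cell l).
  by move=> l l' _ _ [x [/= h1 h2]]; apply: val_inj; exact: cell_inj h1 h2.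
rewrite -lee_fin -sumEFin (eq_bigr _ (fun l _ => esym (prob_fineE (mcell l)))).
rewrite -(measure_bigsetU_ord P predT mcell disj); apply: probability_le1.
exact: bigsetU_measurable.
Qed.

Definition grid_factor (i : 'I_n) (l : 'I_M) : R :=
  if i == j then (val l == 0%N)%:R else fine (P (w i @^-1` cell l)).

Lemma prob_grid_event_le g : fine (P (grid_event g)) <=
  phi * (eps + 2 * n%:R * dl) * \prod_i grid_factor i (g i).
Proof.
have -> : fine (P (grid_event g)) = \prod_i fine (P (w i @^-1` grid_box g i)).
  rewrite /grid_event (ind (@measurable_grid_box g)).
  rewrite (eq_bigr (fun i => (fine (P (w i @^-1` grid_box g i)))%:E)) ?prodEFin //.
  move=> i _; rewrite -prob_fineE //.
  by apply: measurable_weight_preimage; exact: measurable_grid_box.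
rewrite (bigD1 j) //= [X in _ <= _ * X](bigD1 j) //= mulrA.
have -> : \prod_(i | i != j) fine (P (w i @^-1` grid_box g i)) =
          \prod_(i | i != j) grid_factor i (g i).
  by apply: eq_bigr => i ij; rewrite /grid_box /grid_factor (negbTE ij).
apply: ler_wpM2r.
  by apply: prodr_ge0 => i ij; rewrite /grid_factor (negbTE ij) fine_ge0.
rewrite /grid_box /grid_factor eqxx; case: ifP => _; last first.
  by rewrite preimage_set0 measure0 mulr0.
rewrite mulr1 -lee_fin -prob_fineE; first exact: prob_pivot_range_le.
apply: measurable_weight_preimage.
by rewrite /pivot_range; case: ifP => _; exact: measurable_itv.
Qed.

Lemma sum_prob_grid_event_le :
  \sum_(g : {ffun 'I_n -> 'I_M}) fine (P (grid_event g)) <= phi * (eps + 2 * n%:R * dl).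
Proof.
have K_ge0 : 0 <= phi * (eps + 2 * n%:R * dl).
  by rewrite mulr_ge0 ?(density_bound_ge0 j) // addr_ge0 // !mulr_ge0 // ltW.
apply: le_trans (ler_sum _ (fun g _ => prob_grid_event_le g)) _.
rewrite -mulr_sumr -bigA_distr_bigA /= -[X in _ <= X]mulr1 ler_wpM2l //.
apply: prodr_ile1 => i _; rewrite /grid_factor; case: eqP => _.
  case: (M) => [|M']; first by rewrite big_ord0 lexx ler01.
  by rewrite big_ord_recl /= big1 ?addr0 ?ler01 ?lexx.
by rewrite sum_prob_cell_le1 andbT sumr_ge0 // => l _; rewrite fine_ge0.
Qed.

Lemma cell_index x : 0 <= x < M%:R * dl -> exists l : 'I_M, cell l x.
Proof.
case/andP => x_ge0 x_lt.
have q_ge0 : 0 <= x / dl by rewrite divr_ge0 // ltW.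
have /andP[lo_q q_hi] := truncn_itv q_ge0.
have lt_M : (Num.truncn (x / dl) < M)%N.
  by rewrite -(ltr_nat R); apply: le_lt_trans lo_q _; rewrite ltr_pdivrMr.
exists (Ordinal lt_M); rewrite /cell /= in_itv /=.
by rewrite -ler_pdivlMr // lo_q -ltr_pdivrMr.
Qed.

Lemma grid_offset_approx (g : {ffun 'I_n -> 'I_M}) (x : 'I_n -> R) :
  (forall i, i != j -> cell (g i) (x i)) ->
  `|\sum_(i | i != j) a i * x i - grid_offset g| <= n%:R * dl.
Proof.
move=> in_cell; rewrite /grid_offset -sumrB.
apply: le_trans (ler_norm_sum _ _ _) _.
apply: (@le_trans _ _ (\sum_(i < n) dl)); last by rewrite sumr_const card_ord mulr_natl.
rewrite [X in _ <= X](bigID (fun i => i != j)) /= -[X in X <= _]addr0.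
apply: lerD; last by apply: sumr_ge0 => *; exact: ltW.
apply: ler_sum => i ij; rewrite -mulrBr normrM -[X in _ <= X]mul1r.
apply: ler_pM; rewrite ?normr_ge0 ?norm_a //.
have := in_cell i ij; rewrite /cell /= in_itv /= => /andP[c1 c2].
by rewrite ger0_norm ?subr_ge0 //; rewrite mulrSr mulrDl mul1r in c2; lra.
Qed.

Lemma pivot_range_mem (g : {ffun 'I_n -> 'I_M}) (xj Y : R) :
  `|Y - grid_offset g| <= n%:R * dl ->
  0 < a j * xj + Y <= eps -> pivot_range g xj.
Proof.
rewrite ler_norml => /andP[d1 d2] /andP[pos le_eps].
rewrite /pivot_range /pivot_lo /pivot_hi /=.
case: a_j => aj; rewrite aj ?mul1r ?mulN1r in pos le_eps *.
  by rewrite eqxx /= in_itv /=; apply/andP; split; lra.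
have -> : ((-1 : R) == 1) = false by apply/eqP; lra.
by rewrite /= in_itv /=; apply/andP; split; lra.
Qed.

Lemma linear_event_sub_grid :
  linear_event a eps `<=` \big[setU/set0]_(g : {ffun 'I_n -> 'I_M}) grid_event g.
Proof.
move=> om [/not_off_cube w01 /=]; rewrite in_itv /= => /andP[pos le_eps].
have wM i : 0 <= w i om < M%:R * dl.
  by have /andP[w0 w1] := w01 i; rewrite w0 /=; exact: le_lt_trans w1 M_dl.
have [u u_cell] := fin_all_exists (fun i => cell_index (wM i)).
have M_gt0 : (0 < M)%N by exact: leq_ltn_trans (leq0n _) (ltn_ord (u j)).
pose g := [ffun i => if i == j then Ordinal M_gt0 else u i].
apply: (mem_bigsetU (i := g)); rewrite ?mem_index_enum // => i _ /=.
rewrite /grid_box; case: eqVneq => [->|ij]; last by rewrite ffunE (negbTE ij).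
rewrite ffunE eqxx /=.
have sumE : \sum_i a i * w i om = a j * w j om + \sum_(i | i != j) a i * w i om.
  by rewrite (bigD1 j).
apply: (pivot_range_mem (Y := \sum_(i | i != j) a i * w i om)).
  by apply: grid_offset_approx => l lj; rewrite ffunE (negbTE lj); exact: u_cell.
by rewrite -sumE pos le_eps.
Qed.

Lemma prob_linear_event_grid_le :
  (P (linear_event a eps) <= (phi * (eps + 2 * n%:R * dl))%:E)%E.
Proof.
apply: le_trans (le_measure P _ _ linear_event_sub_grid) _.
- by rewrite inE; exact: measurable_linear_event.
- by rewrite inE; apply: bigsetU_measurable => g _; exact: measurable_grid_event.
apply: le_trans (le_measure_bigsetU _ _ _ measurable_grid_event) _.
rewrite (eq_bigr (fun g => (fine (P (grid_event g)))%:E)); last first.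
  by move=> g _; rewrite -prob_fineE //; exact: measurable_grid_event.
by rewrite sumEFin lee_fin sum_prob_grid_event_le.
Qed.

End Grid.

Lemma prob_linear_event_le (a : 'I_n -> R) (j : 'I_n) (eps : R) :
  a j = 1 \/ a j = -1 -> (forall i, `|a i| <= 1) -> 0 <= eps ->
  (P (linear_event a eps) <= (phi * eps)%:E)%E.
Proof.
move=> a_j norm_a eps_ge0; have phi_ge0 := density_bound_ge0 j.
rewrite prob_fineE ?lee_fin; last exact: measurable_linear_event.
apply/ler_addgt0Pr => e e_gt0.
pose K := 2 * n%:R * phi.
have K_ge0 : 0 <= K by rewrite !mulr_ge0.
pose dl := e / (K + 1).
have dl_gt0 : 0 < dl by rewrite divr_gt0 //; lra.
have M_dl : 1 < (Num.truncn dl^-1).+1%:R * dl.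
  have inv_ge0 : 0 <= dl^-1 by rewrite invr_ge0 ltW.
  have /andP[_ lt] := truncn_itv inv_ge0.
  by rewrite -ltr_pdivrMr // div1r.
apply: le_trans (_ : _ <= phi * (eps + 2 * n%:R * dl)) _.
  rewrite -lee_fin -prob_fineE; last exact: measurable_linear_event.
  exact: (prob_linear_event_grid_le a_j norm_a eps_ge0 dl_gt0 M_dl).
have K1_gt0 : 0 < K + 1 by lra.
have -> : phi * (eps + 2 * n%:R * dl) = phi * eps + K * e / (K + 1).
  by rewrite /dl /K; field; rewrite gt_eqF.
rewrite lerD2l ler_pdivrMr //.
by rewrite mulrDr mulr1 [e * K]mulrC lerDl ltW.
Qed.

End SmoothedWeights.

Section ExpectedIterations.
Context (R : realType) (T : finType) (n : nat) (C : 'I_n -> {set T}) (m k : nat)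
  (d : measure_display) (Omega : measurableType d) (P : probability Omega R)
  (w : 'I_n -> Omega -> R) (f : 'I_n -> R -> R) (phi : R).
Hypotheses (mw : forall i, measurable_fun setT (w i))
  (ind : mutually_independent P w)
  (dens : forall i, has_density_bounded P (w i) (f i) phi)
  (phi_ge0 : 0 <= phi).

Definition pattern_event (a : {ffun 'I_n -> 'I_3}) (eps : R) : set Omega :=
  linear_event w (fun i => signed_coef (a i)) eps.

Lemma prob_pattern_event_le a eps : 0 <= eps ->
  (P (pattern_event a eps) <= (phi * eps)%:E)%E.
Proof.
move=> eps_ge0; case: (pickP (fun i => a i != ord0)) => [j aj|a0].
  apply: (prob_linear_event_le mw ind dens (j := j)) => //.
  - exact: signed_coef_pm.
  - by move=> i; exact: norm_signed_coef_le1.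
rewrite (_ : pattern_event a eps = set0) ?measure0 ?lee_fin ?mulr_ge0 //.
apply/seteqP; split => // om [_ /=]; rewrite in_itv /= big1 ?ltxx // => i _.
by have /negbFE/eqP -> := a0 i; rewrite /signed_coef mul0r.
Qed.

Definition run_event (t : nat) : set Omega :=
  off_cube w `|` \big[setU/set0]_(h : {ffun 'I_k -> T})
    \big[setU/set0]_(a | admissible_pattern C h a) pattern_event a (n%:R / t.+1%:R).

Lemma measurable_run_event t : measurable (run_event t).
Proof.
apply: measurableU; first exact: measurable_off_cube.
do 2 apply: bigsetU_measurable => ? _.
exact: measurable_linear_event.
Qed.

Lemma prob_run_event_le t : (P (run_event t) <=
  ((#|T| ^ k * 3 ^ (k * max_degree C))%:R * (phi * (n%:R / t.+1%:R)))%:E)%E.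
Proof.
set eps := n%:R / t.+1%:R.
have eps_ge0 : 0 <= eps by rewrite divr_ge0.
have mE (h : {ffun 'I_k -> T}) :
    measurable (\big[setU/set0]_(a | admissible_pattern C h a) pattern_event a eps).
  by apply: bigsetU_measurable => a _; exact: measurable_linear_event.
apply: le_trans (measureU2 _ (measurable_off_cube mw) _) _.
  by apply: bigsetU_measurable => h _; exact: mE.
rewrite -[X in (X + _)%E]/(P (off_cube w)) (prob_off_cube mw dens) add0e natrM -mulrA.
have -> : (#|T| ^ k)%N = #|{ffun 'I_k -> T}| by rewrite card_ffun card_ord.
apply: le_measure_bigsetU_card => // h _.
apply: le_trans (le_measure_bigsetU_card (c := phi * eps) _ _) _.
- by move=> a; exact: measurable_linear_event.
- by move=> a _; exact: prob_pattern_event_le.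
rewrite lee_fin ler_wpM2r ?mulr_ge0 // ler_nat.
exact: card_admissible_pattern.
Qed.

Lemma in_run_event t om :
  (t < max_iterations C m k (fun i => w i om))%N -> run_event t om.
Proof.
move=> lt_t; have [off|on_cube] := pselect (off_cube w om); first by left.
right; set v := fun i => w i om.
have X_gt0 : (0 < max_iterations C m k v)%N by apply: leq_ltn_trans lt_t.
have [h [a [adm /andP[pos small]]]] :=
  has_run_small_gain (not_off_cube on_cube) X_gt0 (max_iterations_has_run X_gt0).
apply: (mem_bigsetU (i := h)); rewrite ?mem_index_enum //.
apply: (mem_bigsetU (i := a)); rewrite ?mem_index_enum //; split => //=; rewrite in_itv /=.
apply/andP; split; first exact: pos.
apply: le_trans small _; apply: ler_wpM2l => //.
by rewrite lef_pV2 ?posrE ?ltr0n // ler_nat.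
Qed.

Lemma max_iterations_le_sum_indic om :
  (max_iterations C m k (fun i => w i om))%:R <=
    \sum_(t < 2 ^ n) \1_(run_event t) om :> R.
Proof.
have /ltnW/minn_idPr X_le := max_iterations_lt C m k (fun i => w i om).
rewrite -X_le -sum_ltn_minn natr_sum; apply: ler_sum => t _.
have [/in_run_event Et|_] := ltnP t (max_iterations C m k (fun i => w i om)).
  by rewrite indicE mem_set.
by rewrite indicE ler0n.
Qed.

Lemma expected_max_iterations_le :
  (\int[P]_(om in setT) ((max_iterations C m k (fun i => w i om))%:R)%:E <=
   ((#|T| ^ k * 3 ^ (k * max_degree C))%:R * phi * n%:R * n.+1%:R)%:E)%E.
Proof.
apply: le_trans (@le_integral_ge0 _ _ _ P _
  (fun om => (\sum_(t < 2 ^ n) \1_(run_event t) om)%:E) _ _) _.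
- by move=> om; rewrite lee_fin ler0n.
- by move=> om; rewrite lee_fin max_iterations_le_sum_indic.
rewrite (eq_integral (fun om => \sum_(t < 2 ^ n) (\1_(run_event t) om)%:E)); last first.
  by move=> om _; rewrite sumEFin.
rewrite ge0_integral_sum //; last first.
  move=> t; apply/measurable_realfun.measurable_EFinP.
  exact/measurable_realfun.measurable_indic/measurable_run_event.
rewrite (eq_bigr (fun t : 'I_(2 ^ n) => P (run_event t))); last first.
  by move=> t _; rewrite integral_indic ?setIT //; exact: measurable_run_event.
apply: le_trans (@lee_sum _ _ _ _ _ _ (fun (t : 'I_(2 ^ n)) _ => prob_run_event_le t)) _.
rewrite sumEFin lee_fin -!mulrA -mulr_sumr ler_wpM2l // -mulr_sumr ler_wpM2l //.
rewrite -mulr_sumr ler_wpM2l // (eq_bigr (fun t : 'I_(2 ^ n) => (t.+1%:R)^-1)) //.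
exact: harmonic_pow2_le.
Qed.

End ExpectedIterations.

Theorem mainTheorem16 (R : realType) :
  exists c : R, 0 < c /\
  forall (T : finType) (n : nat) (C : 'I_n -> {set T}) (m k : nat)
    (d : measure_display) (Omega : measurableType d) (P : probability Omega R)
    (w : 'I_n -> Omega -> R) (f : 'I_n -> R -> R) (phi : R),
    (forall i, measurable_fun setT (w i)) ->
    mutually_independent P w ->
    (forall i, has_density_bounded P (w i) (f i) phi) ->
    (\int[P]_(om in setT) ((max_iterations C m k (fun i => w i om))%:R)%:E
      <= (c * (3 ^ (k * max_degree C) * #|T| ^ k * n ^ 2)%:R * phi)%:E)%E.
Proof.
exists 2; split => // T n C m k d Omega P w f phi mw ind dens.
have [n0|n_gt0] := posnP n.
  have X0 om : max_iterations C m k (fun i => w i om) = 0%N.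
    have pow0 : (2 ^ n = 1)%N by rewrite n0.
    by apply/eqP; rewrite -leqn0 -ltnS -pow0 max_iterations_lt.
  rewrite (eq_integral (fun=> 0%E)) ?integral0; last by move=> om _; rewrite X0.
  have sq0 : (n ^ 2 = 0)%N by rewrite n0.
  by rewrite sq0 muln0 mulr0 mul0r.
have phi_ge0 := density_bound_ge0 dens (Ordinal n_gt0).
apply: le_trans (expected_max_iterations_le C m k mw ind dens phi_ge0) _.
set Q := (#|T| ^ k * 3 ^ (k * max_degree C))%:R : R.
have -> : (3 ^ (k * max_degree C) * #|T| ^ k * n ^ 2)%:R = Q * n%:R ^+ 2 :> R.
  by rewrite /Q !natrM !natrX; ring.
rewrite lee_fin (_ : 2 * _ * phi = Q * phi * n%:R * (2 * n%:R)); last by ring.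
rewrite ler_wpM2l ?mulr_ge0 // mulrSr.
have : 1 <= n%:R :> R by rewrite ler1n.
lra.
Qed.
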